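(* Let $k>0$ and consider the system of ODEs, in cylindrical coordinates $(r,\theta,z)$ on $\mathbb{R}^3$ with momenta $p_R,p_S$, \[ \dot r = p_R,\quad \dot\theta = \frac{p_S}{r^2},\quad \dot z = \frac{p_S}{2},\quad \dot p_R = \frac{p_S^2}{r^3} - \frac{2kr^3}{(r^4+16z^2)^{3/2}},\quad \dot p_S = -\frac{8kr^2 z}{(r^4+16z^2)^{3/2}}, \] with energy $H = \frac12\big(p_R^2+\frac{p_S^2}{r^2}\big) - \frac{k}{\sqrt{r^4+16z^2}}$ and first integral $F_3 = (2zp_R-rp_S)^2 + 4z^2\big(\frac{p_S^2}{r^2}+\frac{2k}{\sqrt{r^4+16z^2}}\big)$. The only trajectories of this system passing through the origin are straight lines in the plane $z=0$; along them $\theta$ is constant and $r(t)$ satisfies $\frac{\dot r^2}{2} = H + \frac{k}{r^2}$. These trajectories are exactly those with $F_3 = 0$.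
   Context: The system describes nonholonomic motion on the Heisenberg group in the potential $-k/\sqrt{r^4+16z^2}$ in cylindrical coordinates $x=r\cos\theta$, $y=r\sin\theta$. *)

From Stdlib Require Import Reals.
From Coquelicot Require Import Coquelicot.
Open Scope R_scope.

Definition Dn (r z : R) : R := r ^ 4 + 16 * z ^ 2.

Definition Hen (k r z pR pS : R) : R :=
  / 2 * (pR ^ 2 + pS ^ 2 / r ^ 2) - k / sqrt (Dn r z).

Definition F3 (k r z pR pS : R) : R :=
  (2 * z * pR - r * pS) ^ 2 + 4 * z ^ 2 * (pS ^ 2 / r ^ 2 + 2 * k / sqrt (Dn r z)).

Definition in_tint (a b : Rbar) (t : R) : Prop := Rbar_lt a t /\ Rbar_lt t b.

(* (r,th,z,pR,pS) solves the system on the nonempty open interval (a,b),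
   with r > 0 (cylindrical coordinates away from the z-axis, where the
   equations are defined).  (D)^(3/2) is written (sqrt D)^3. *)
Definition is_solution (k : R) (a b : Rbar) (r th z pR pS : R -> R) : Prop :=
  Rbar_lt a b /\
  forall t, in_tint a b t ->
    0 < r t /\
    is_derive r t (pR t) /\
    is_derive th t (pS t / r t ^ 2) /\
    is_derive z t (pS t / 2) /\
    is_derive pR t (pS t ^ 2 / r t ^ 3
                    - 2 * k * r t ^ 3 / (sqrt (Dn (r t) (z t))) ^ 3) /\
    is_derive pS t (- (8 * k * r t ^ 2 * z t) / (sqrt (Dn (r t) (z t))) ^ 3).

Definition maximal_solution (k : R) (a b : Rbar) (r th z pR pS : R -> R) : Prop :=
  is_solution k a b r th z pR pS /\
  forall (a' b' : Rbar) (r' th' z' pR' pS' : R -> R),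
    is_solution k a' b' r' th' z' pR' pS' ->
    Rbar_le a' a -> Rbar_le b b' ->
    (forall t, in_tint a b t ->
       r' t = r t /\ th' t = th t /\ z' t = z t /\ pR' t = pR t /\ pS' t = pS t) ->
    a' = a /\ b' = b.

(* the trajectory passes through the origin (r,z) = (0,0): it reaches it at a
   finite endpoint of its time interval *)
Definition passes_origin (a b : Rbar) (r z : R -> R) : Prop :=
  (exists a0, a = Finite a0 /\
     filterlim r (at_right a0) (locally 0) /\ filterlim z (at_right a0) (locally 0)) \/
  (exists b0, b = Finite b0 /\
     filterlim r (at_left b0) (locally 0) /\ filterlim z (at_left b0) (locally 0)).

Definition radial_line (k : R) (a b : Rbar) (r th z pR pS : R -> R) : Prop :=
  exists th0 E, forall t, in_tint a b t ->
    z t = 0 /\ th t = th0 /\ Hen k (r t) (z t) (pR t) (pS t) = E /\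
    (Derive r t) ^ 2 / 2 = E + k / r t ^ 2.

From Stdlib Require Import Reals Lra Psatz.
From Coquelicot Require Import Coquelicot.
Open Scope R_scope.

(* H and F3 are first integrals.  F3 is a sum of nonnegative terms vanishing only
   when z = p_S = 0, and near the origin it is at most a constant (depending on H)
   times max(|r|, |z|); so a trajectory reaching the origin has F3 = 0, hence
   z = p_S = 0 and constant theta: it is a radial line.  Conversely, when F3 = 0
   the motion is radial and r^2 is a quadratic Q in t with Q' = 2 r p_R and
   Q'' = 4 H, whose discriminant is 8 k > 0.  The explicit solution r = sqrt Q
   lives on the component of {Q > 0} around the initial time, which has a finite
   end where Q vanishes; maximality forces the time interval to be this
   component, so r -> 0 at that end. *)

Lemma in_tint_between (a b : Rbar) (t1 t2 t : R) :
  in_tint a b t1 -> in_tint a b t2 -> t1 <= t <= t2 -> in_tint a b t.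
Proof.
intros [Ha1 _] [_ Hb2] [H1 H2]; split.
- apply (Rbar_lt_le_trans a t1 t); auto.
- apply (Rbar_le_lt_trans t t2 b); auto.
Qed.

Lemma in_tint_inhabited a b : Rbar_lt a b -> exists t, in_tint a b t.
Proof.
unfold in_tint.
destruct a as [a| |], b as [b| |]; simpl; intros H; try contradiction.
- exists ((a + b) / 2); simpl; lra.
- exists (a + 1); simpl; lra.
- exists (b - 1); simpl; lra.
- exists 0; simpl; auto.
Qed.

Lemma at_right_in_tint (a0 : R) (b : Rbar) :
  Rbar_lt a0 b -> at_right a0 (in_tint a0 b).
Proof.
intros H. destruct b as [b| |]; simpl in H; try contradiction.
- assert (Hba : 0 < b - a0) by lra.
  exists (mkposreal _ Hba); intros t Ht Hat; split; simpl; auto.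
  apply Rabs_lt_between in Ht; simpl in Ht; unfold minus, plus, opp in Ht; simpl in Ht; lra.
- exists (mkposreal 1 Rlt_0_1); intros t _ Hat; split; simpl; auto.
Qed.

Lemma at_left_in_tint (a : Rbar) (b0 : R) :
  Rbar_lt a b0 -> at_left b0 (in_tint a b0).
Proof.
intros H. destruct a as [a| |]; simpl in H; try contradiction.
- assert (Hba : 0 < b0 - a) by lra.
  exists (mkposreal _ Hba); intros t Ht Htb; split; simpl; auto.
  apply Rabs_lt_between in Ht; simpl in Ht; unfold minus, plus, opp in Ht; simpl in Ht; lra.
- exists (mkposreal 1 Rlt_0_1); intros t _ Htb; split; simpl; auto.
Qed.

Lemma lower_endpoint_le (a b al : Rbar) (t0 : R) :
  in_tint a b t0 -> Rbar_lt al t0 -> (forall x, al = Finite x -> ~ in_tint a b x) ->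
  Rbar_le al a.
Proof.
intros [_ Hb] Hal Hnot; destruct al as [x| |]; [| contradiction | destruct a; simpl; auto].
destruct (Rbar_le_lt_dec x a) as [|Hxa]; auto.
exfalso; apply (Hnot x eq_refl); split; auto.
apply (Rbar_lt_trans x t0 b); auto.
Qed.

Lemma upper_endpoint_ge (a b be : Rbar) (t0 : R) :
  in_tint a b t0 -> Rbar_lt t0 be -> (forall x, be = Finite x -> ~ in_tint a b x) ->
  Rbar_le b be.
Proof.
intros [Ha _] Hbe Hnot; destruct be as [x| |]; [| destruct b; simpl; auto | contradiction].
destruct (Rbar_le_lt_dec b x) as [|Hxb]; auto.
exfalso; apply (Hnot x eq_refl); split; auto.
apply (Rbar_lt_trans a t0 x); auto.
Qed.

Lemma is_derive_0_const_tint a b (f : R -> R) :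
  (forall t, in_tint a b t -> is_derive f t 0) ->
  forall t1 t2, in_tint a b t1 -> in_tint a b t2 -> f t1 = f t2.
Proof.
intros Hd.
assert (Hlt : forall t1 t2, t1 < t2 -> in_tint a b t1 -> in_tint a b t2 -> f t1 = f t2).
{ intros t1 t2 H12 H1 H2.
  destruct (MVT_cor2 f (fun _ => 0) t1 t2 H12) as [c [Hc _]]; [|lra].
  intros c Hc; apply is_derive_Reals, Hd, (in_tint_between a b t1 t2); auto. }
intros t1 t2 H1 H2.
destruct (Rtotal_order t1 t2) as [H|[->|H]]; auto.
symmetry; auto.
Qed.

Lemma locally_0_abs_lt (d : R) : 0 < d -> locally 0 (fun y => Rabs y < d).
Proof.
intros Hd; exists (mkposreal d Hd); intros y Hy.
rewrite <- (Rminus_0_r y); exact Hy.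
Qed.

(* [auto_derive] leaves the eta-expanded [Derive (fun x => f x) t], which a
   plain rewrite with [is_derive_unique] does not match. *)
Local Ltac use_derive H :=
  match type of H with is_derive ?f ?t ?l =>
    replace (Derive (fun x => f x) t) with l by (symmetry; exact (is_derive_unique _ _ _ H))
  end.

Lemma Dn_pos r z : 0 < r -> 0 < Dn r z.
Proof. intros Hr; unfold Dn; pose proof (pow_lt r 4 Hr); nra. Qed.

Lemma sqrt_Dn_cube r z : sqrt (Dn r z) ^ 3 = sqrt (Dn r z) * Dn r z.
Proof.
rewrite <- (sqrt_sqrt (Dn r z)) at 3 by (unfold Dn; pose proof (pow2_ge_0 (r ^ 2)); nra).
ring.
Qed.

Lemma sqrt_Dn_planar r : sqrt (Dn r 0) = r ^ 2.
Proof.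
unfold Dn; replace (r ^ 4 + 16 * 0 ^ 2) with ((r ^ 2) ^ 2) by ring.
apply sqrt_pow2, pow2_ge_0.
Qed.

Lemma Hen_planar k r pR : 0 < r -> Hen k r 0 pR 0 = pR ^ 2 / 2 - k / r ^ 2.
Proof. intros Hr; unfold Hen; rewrite sqrt_Dn_planar; field; lra. Qed.

Lemma F3_potential_pos k r z pS : 0 < k -> 0 < r ->
  0 < pS ^ 2 / r ^ 2 + 2 * k / sqrt (Dn r z).
Proof.
intros Hk Hr; pose proof (sqrt_lt_R0 _ (Dn_pos r z Hr)).
assert (0 <= pS ^ 2 / r ^ 2) by (apply Rdiv_le_0_compat; nra).
assert (0 < 2 * k / sqrt (Dn r z)) by (apply Rdiv_lt_0_compat; lra).
lra.
Qed.

Lemma F3_ge0 k r z pR pS : 0 < k -> 0 < r -> 0 <= F3 k r z pR pS.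
Proof.
intros Hk Hr; pose proof (F3_potential_pos k r z pS Hk Hr); unfold F3.
pose proof (pow2_ge_0 (2 * z * pR - r * pS)); pose proof (pow2_ge_0 z); nra.
Qed.

Lemma F3_eq0 k r z pR pS : 0 < k -> 0 < r -> F3 k r z pR pS = 0 -> z = 0 /\ pS = 0.
Proof.
intros Hk Hr; pose proof (F3_potential_pos k r z pS Hk Hr); unfold F3.
set (P := _ + _) in *; set (X := 2 * z * pR - r * pS).
pose proof (pow2_ge_0 X); pose proof (pow2_ge_0 z).
intros HF; assert (Hz : z ^ 2 * P = 0) by nra.
apply Rmult_integral in Hz as [Hz|]; [|lra].
assert (z = 0) by nra; subst z; split; [reflexivity|].
assert (HX : X = 0) by nra; unfold X in HX; nra.
Qed.

Lemma sqrt_Dn_ge_sqr r z : r ^ 2 <= sqrt (Dn r z).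
Proof.
rewrite <- (sqrt_pow2 (r ^ 2)) by apply pow2_ge_0.
apply sqrt_le_1_alt; unfold Dn; nra.
Qed.

Lemma sqrt_Dn_ge_abs r z : 4 * Rabs z <= sqrt (Dn r z).
Proof.
rewrite <- (sqrt_pow2 (4 * Rabs z)) by (pose proof (Rabs_pos z); lra).
apply sqrt_le_1_alt; unfold Dn.
rewrite Rpow_mult_distr, pow2_abs; pose proof (pow2_ge_0 (r ^ 2)); nra.
Qed.

Lemma F3_le_Hen k r z pR pS : 0 < r ->
  F3 k r z pR pS <= 4 * (4 * z ^ 2 + r ^ 4) * Hen k r z pR pS
                    + 4 * k * (6 * z ^ 2 + r ^ 4) / sqrt (Dn r z).
Proof.
intros Hr; pose proof (sqrt_lt_R0 _ (Dn_pos r z Hr)) as Hs.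
set (q := pS / r); set (s := sqrt (Dn r z)) in *.
assert (HF : F3 k r z pR pS = (2 * z * pR - r ^ 2 * q) ^ 2 + 4 * z ^ 2 * q ^ 2
                              + 8 * k * z ^ 2 / s)
  by (unfold F3, q; fold s; field; lra).
assert (HH : 4 * (4 * z ^ 2 + r ^ 4) * Hen k r z pR pS + 4 * k * (6 * z ^ 2 + r ^ 4) / s
             = 2 * (4 * z ^ 2 + r ^ 4) * (pR ^ 2 + q ^ 2) + 8 * k * z ^ 2 / s)
  by (unfold Hen, q; fold s; field; lra).
rewrite HF, HH.
pose proof (pow2_ge_0 (2 * z * pR + r ^ 2 * q)).
pose proof (pow2_ge_0 (z * q)); pose proof (pow2_ge_0 (r ^ 2 * pR)).
nra.
Qed.

Lemma F3_le_near_origin k r z pR pS d : 0 < k -> 0 < r -> d <= 1 ->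
  Rabs r < d -> Rabs z < d ->
  F3 k r z pR pS <= (20 * Rabs (Hen k r z pR pS) + 10 * k) * d.
Proof.
intros Hk Hr Hd1 Hrd Hzd.
pose proof (F3_le_Hen k r z pR pS Hr) as HF.
pose proof (sqrt_lt_R0 _ (Dn_pos r z Hr)) as Hs.
pose proof (sqrt_Dn_ge_sqr r z); pose proof (sqrt_Dn_ge_abs r z).
set (s := sqrt (Dn r z)) in *; set (E := Hen k r z pR pS) in *.
rewrite Rabs_pos_eq in Hrd by lra.
pose proof (Rabs_pos z); pose proof (pow2_abs z).
assert (Hpot : (6 * z ^ 2 + r ^ 4) / s <= 3 / 2 * Rabs z + r ^ 2).
{ apply Rle_div_l; [lra|].
  assert (0 <= Rabs z * (s - 4 * Rabs z)) by (apply Rmult_le_pos; lra).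
  assert (0 <= r ^ 2 * (s - r ^ 2)) by (apply Rmult_le_pos; [apply pow2_ge_0 | lra]).
  nra. }
assert (Hz2 : z ^ 2 <= d) by nra.
assert (Hr2 : r ^ 2 <= d) by nra.
assert (Hr4 : r ^ 4 <= d) by nra.
assert (Hkin : (4 * z ^ 2 + r ^ 4) * E <= 5 * d * Rabs E).
{ pose proof (Rle_abs E); pose proof (Rabs_pos E); pose proof (pow2_ge_0 (r ^ 2)).
  apply Rle_trans with ((4 * z ^ 2 + r ^ 4) * Rabs E); nra. }
assert (4 * k * (6 * z ^ 2 + r ^ 4) / s <= 10 * k * d).
{ replace (4 * k * (6 * z ^ 2 + r ^ 4) / s) with (4 * k * ((6 * z ^ 2 + r ^ 4) / s))
    by (field; lra).
  nra. }
nra.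
Qed.

Definition quad (A B C t0 t : R) : R := A * (t - t0) ^ 2 + B * (t - t0) + C.

Lemma is_derive_quad A B C t0 t : is_derive (quad A B C t0) t (2 * A * (t - t0) + B).
Proof. unfold quad; auto_derive; auto; ring. Qed.

Definition pos_component (q : R -> R) (al be : Rbar) : Prop :=
  (forall t, in_tint al be t -> 0 < q t) /\
  (forall x, al = Finite x -> q x = 0) /\
  (forall x, be = Finite x -> q x = 0).

Lemma quad_factor A B C t0 d t : 0 < C -> d * d = B ^ 2 - 4 * A * C ->
  4 * C * quad A B C t0 t = (2 * C - (d - B) * (t - t0)) * (2 * C + (d + B) * (t - t0)).
Proof.
intros HC Hd2; replace A with ((B ^ 2 - d * d) / (4 * C)) by (rewrite Hd2; field; lra).
unfold quad; field; lra.
Qed.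

Lemma quad_pos_component A B C t0 : 0 < C -> 0 < B ^ 2 - 4 * A * C ->
  exists al be : Rbar, in_tint al be t0 /\ pos_component (quad A B C t0) al be /\
    ((exists x, al = Finite x) \/ (exists x, be = Finite x)).
Proof.
intros HC HD.
set (d := sqrt (B ^ 2 - 4 * A * C)).
assert (Hd2 : d * d = B ^ 2 - 4 * A * C) by (apply sqrt_sqrt; lra).
assert (Hd : 0 < d) by (apply sqrt_lt_R0; lra).
pose proof (fun t => quad_factor A B C t0 d t HC Hd2) as Hfac.
assert (Hpos : forall t, 0 < 2 * C - (d - B) * (t - t0) -> 0 < 2 * C + (d + B) * (t - t0) ->
                         0 < quad A B C t0 t).
{ intros t H1 H2; specialize (Hfac t); nra. }
assert (Hroot : forall t, (d - B) * (t - t0) = 2 * C \/ (d + B) * (t - t0) = - (2 * C) ->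
                          quad A B C t0 t = 0).
{ intros t Ht; specialize (Hfac t); destruct Ht as [Ht|Ht]; rewrite Ht in Hfac; nra. }
(* The roots are t0 + x and t0 - y, written as 2C/(d -+ B) rather than
   (-B +- d)/(2A) so that the degenerate case A = 0 needs no separate treatment. *)
set (x := 2 * C / (d - B)); set (y := 2 * C / (d + B)).
destruct (Rle_lt_dec (d + B) 0) as [HdBl|HdBl], (Rle_lt_dec (d - B) 0) as [HdBr|HdBr];
  [lra| | |].
- assert (Hx : (d - B) * x = 2 * C) by (unfold x; field; lra).
  assert (0 < x) by (apply Rdiv_lt_0_compat; lra).
  exists m_infty, (t0 + x); split; [split; simpl; auto; lra|].
  split; [|right; eexists; reflexivity].
  split; [|split; [discriminate | intros ? [= <-]; apply Hroot; left; nra]].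
  intros t [_ Ht]; simpl in Ht; apply Hpos; [nra|].
  assert (0 <= (d + B) * (t - t0 - x)) by nra; nra.
- assert (Hy : (d + B) * y = 2 * C) by (unfold y; field; lra).
  assert (0 < y) by (apply Rdiv_lt_0_compat; lra).
  exists (t0 - y), p_infty; split; [split; simpl; auto; lra|].
  split; [|left; eexists; reflexivity].
  split; [|split; [intros ? [= <-]; apply Hroot; right; nra | discriminate]].
  intros t [Ht _]; simpl in Ht; apply Hpos; [|nra].
  assert (0 <= (d - B) * (- y - (t - t0))) by nra; nra.
- assert (Hx : (d - B) * x = 2 * C) by (unfold x; field; lra).
  assert (Hy : (d + B) * y = 2 * C) by (unfold y; field; lra).
  assert (0 < x) by (apply Rdiv_lt_0_compat; lra).
  assert (0 < y) by (apply Rdiv_lt_0_compat; lra).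
  exists (t0 - y), (t0 + x); split; [split; simpl; lra|].
  split; [|left; eexists; reflexivity].
  split; [|split; intros ? [= <-]; apply Hroot; [right|left]; nra].
  intros t [Hl Hr]; simpl in Hl, Hr; apply Hpos; nra.
Qed.

Lemma radial_solution_quad k A B C t0 (al be : Rbar) th0 :
  B ^ 2 - 4 * A * C = 8 * k -> Rbar_lt al be ->
  (forall t, in_tint al be t -> 0 < quad A B C t0 t) ->
  is_solution k al be (fun t => sqrt (quad A B C t0 t)) (fun _ => th0) (fun _ => 0)
    (fun t => (2 * A * (t - t0) + B) / (2 * sqrt (quad A B C t0 t))) (fun _ => 0).
Proof.
intros HD Hab Hq; split; auto; intros t Ht.
specialize (Hq t Ht); pose proof (sqrt_lt_R0 _ Hq) as Hs.
pose proof (sqrt_sqrt _ (Rlt_le _ _ Hq)) as Hs2.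
pose proof (is_derive_quad A B C t0 t) as Dq.
rewrite sqrt_Dn_planar.
split; [exact Hs|]; split; [|split; [|split; [|split]]].
- apply (is_derive_sqrt (quad A B C t0)); auto.
- rewrite Rdiv_0_l; exact (is_derive_const _ t).
- unfold Rdiv at 1; rewrite Rmult_0_l; exact (is_derive_const _ t).
- auto_derive.
  + repeat split; try (eexists; eassumption); lra.
  + use_derive Dq.
    assert (Hid : (2 * A * (t - t0) + B) ^ 2 - 4 * A * quad A B C t0 t = 8 * k)
      by (unfold quad; rewrite <- HD; ring).
    set (Q := quad A B C t0 t) in *; set (s := sqrt Q) in *.
    replace k with (((2 * A * (t - t0) + B) ^ 2 - 4 * A * (s * s)) / 8) by (rewrite Hs2; lra).
    field; lra.
- rewrite Rmult_0_r, Ropp_0, Rdiv_0_l; exact (is_derive_const _ t).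
Qed.

Section Solution.

Context {k : R} {a b : Rbar} {r th z pR pS : R -> R}.
Hypothesis sol : is_solution k a b r th z pR pS.

(* The derivative vanishes only modulo sqrt D ^ 2 = D, so all higher powers of
   sqrt D are rewritten in terms of D before calling field. *)
Local Ltac first_integral_derive t Ht :=
  destruct (proj2 sol t Ht) as (Hr & Dr & _ & Dz & DpR & DpS);
  rewrite sqrt_Dn_cube in DpR, DpS;
  pose proof (Dn_pos (r t) (z t) Hr) as HD;
  pose proof (sqrt_sqrt _ (Rlt_le _ _ HD)) as Hs2;
  unfold Dn in *; auto_derive;
  try solve [repeat split;
    first [eexists; eassumption | nra | apply Rgt_not_eq, sqrt_lt_R0; nra]];
  use_derive Dr; use_derive Dz; use_derive DpR; use_derive DpS;
  simpl in *; rewrite !Rmult_1_r in *; set (s := sqrt _) in *;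
  assert (0 < s) by (apply sqrt_lt_R0; nra);
  rewrite Hs2; field; split; nra.

Lemma is_derive_Hen_solution t : in_tint a b t ->
  is_derive (fun t => Hen k (r t) (z t) (pR t) (pS t)) t 0.
Proof. intros Ht; unfold Hen; first_integral_derive t Ht. Qed.

Lemma is_derive_F3_solution t : in_tint a b t ->
  is_derive (fun t => F3 k (r t) (z t) (pR t) (pS t)) t 0.
Proof. intros Ht; unfold F3; first_integral_derive t Ht. Qed.

Lemma Hen_solution_const t1 t2 : in_tint a b t1 -> in_tint a b t2 ->
  Hen k (r t1) (z t1) (pR t1) (pS t1) = Hen k (r t2) (z t2) (pR t2) (pS t2).
Proof.
apply (is_derive_0_const_tint a b (fun t => Hen k (r t) (z t) (pR t) (pS t))).
exact is_derive_Hen_solution.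
Qed.

Lemma F3_solution_const t1 t2 : in_tint a b t1 -> in_tint a b t2 ->
  F3 k (r t1) (z t1) (pR t1) (pS t1) = F3 k (r t2) (z t2) (pR t2) (pS t2).
Proof.
apply (is_derive_0_const_tint a b (fun t => F3 k (r t) (z t) (pR t) (pS t))).
exact is_derive_F3_solution.
Qed.

Hypothesis hk : 0 < k.

Lemma F3_solution_eq0_of_tends_origin (F : (R -> Prop) -> Prop) : ProperFilter F ->
  F (in_tint a b) -> filterlim r F (locally 0) -> filterlim z F (locally 0) ->
  forall t, in_tint a b t -> F3 k (r t) (z t) (pR t) (pS t) = 0.
Proof.
intros HF Hab Hr Hz t Ht.
pose proof (proj1 (proj2 sol t Ht)) as Hrt.
set (M := 20 * Rabs (Hen k (r t) (z t) (pR t) (pS t)) + 10 * k).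
assert (HM : 0 < M) by (pose proof (Rabs_pos (Hen k (r t) (z t) (pR t) (pS t))); unfold M; lra).
assert (Hsmall : forall d, 0 < d <= 1 -> F3 k (r t) (z t) (pR t) (pS t) <= M * d).
{ intros d [Hd0 Hd1].
  assert (Hrd : F (fun u => Rabs (r u) < d)) by exact (Hr _ (locally_0_abs_lt d Hd0)).
  assert (Hzd : F (fun u => Rabs (z u) < d)) by exact (Hz _ (locally_0_abs_lt d Hd0)).
  destruct (Hierarchy.filter_ex _ (filter_and _ _ Hab (filter_and _ _ Hrd Hzd)))
    as (u & Hu & Hru & Hzu).
  unfold M; rewrite (F3_solution_const t u), (Hen_solution_const t u) by auto.
  apply F3_le_near_origin; auto.
  apply (proj2 sol u Hu). }
apply Rle_antisym; [|apply F3_ge0; auto].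
apply Rle_plus_epsilon; intros eps Heps.
assert (Hd : 0 < Rmin 1 (eps / M) <= 1)
  by (split; [apply Rmin_pos; [lra | apply Rdiv_lt_0_compat; auto] | apply Rmin_l]).
apply (Rle_trans _ _ _ (Hsmall _ Hd)).
apply (Rle_trans _ (M * (eps / M))); [apply Rmult_le_compat_l, Rmin_r; lra|].
right; field; lra.
Qed.

Lemma F3_solution_eq0_of_passes_origin : passes_origin a b r z ->
  forall t, in_tint a b t -> F3 k (r t) (z t) (pR t) (pS t) = 0.
Proof.
pose proof (proj1 sol) as Hab.
intros [[a0 (Ha & Hr & Hz)]|[b0 (Hb & Hr & Hz)]].
- apply (F3_solution_eq0_of_tends_origin (at_right a0)); auto using at_right_proper_filter.
  rewrite Ha in Hab |- *; apply at_right_in_tint; auto.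
- apply (F3_solution_eq0_of_tends_origin (at_left b0)); auto using at_left_proper_filter.
  rewrite Hb in Hab |- *; apply at_left_in_tint; auto.
Qed.

Section Planar.

Hypothesis F3_0 : forall t, in_tint a b t -> F3 k (r t) (z t) (pR t) (pS t) = 0.

Lemma planar_solution t : in_tint a b t -> z t = 0 /\ pS t = 0.
Proof. intros Ht; apply (F3_eq0 k (r t) (z t) (pR t)); auto; apply (proj2 sol t Ht). Qed.

Lemma th_solution_const t1 t2 : in_tint a b t1 -> in_tint a b t2 -> th t1 = th t2.
Proof.
apply is_derive_0_const_tint; intros t Ht.
destruct (proj2 sol t Ht) as (_ & _ & Dth & _).
rewrite (proj2 (planar_solution t Ht)), Rdiv_0_l in Dth; exact Dth.
Qed.

Lemma Hen_planar_solution t : in_tint a b t ->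
  Hen k (r t) (z t) (pR t) (pS t) = pR t ^ 2 / 2 - k / r t ^ 2.
Proof.
intros Ht; destruct (planar_solution t Ht) as [-> ->].
apply Hen_planar, (proj2 sol t Ht).
Qed.

Lemma radial_line_of_F3_eq0 : radial_line k a b r th z pR pS.
Proof.
destruct (in_tint_inhabited a b (proj1 sol)) as [t0 Ht0].
exists (th t0), (Hen k (r t0) (z t0) (pR t0) (pS t0)); intros t Ht.
destruct (proj2 sol t Ht) as (Hr & Dr & _).
rewrite (is_derive_unique _ _ _ Dr), <- (Hen_solution_const t t0), Hen_planar_solution by auto.
split; [apply planar_solution; auto|].
split; [apply th_solution_const; auto|].
split; [reflexivity | field; lra].
Qed.

Variable t0 : R.
Hypothesis Ht0 : in_tint a b t0.

Let E := Hen k (r t0) (z t0) (pR t0) (pS t0).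
Let A := 2 * E.
Let B := 2 * r t0 * pR t0.
Let C := r t0 ^ 2.

Lemma r_pR_affine t : in_tint a b t -> 2 * r t * pR t = 2 * A * (t - t0) + B.
Proof.
intros Ht.
enough (Hc : 2 * r t * pR t - 2 * A * (t - t0) = 2 * r t0 * pR t0 - 2 * A * (t0 - t0))
  by (unfold B; lra).
apply (is_derive_0_const_tint a b (fun t => 2 * r t * pR t - 2 * A * (t - t0))); auto.
intros u Hu; destruct (proj2 sol u Hu) as (Hr & Dr & _ & _ & DpR & _).
destruct (planar_solution u Hu) as [Hz HpS].
rewrite Hz, HpS, sqrt_Dn_planar in DpR.
assert (HE : E = pR u ^ 2 / 2 - k / r u ^ 2)
  by (unfold E; rewrite <- Hen_planar_solution; auto using Hen_solution_const).
auto_derive; [repeat split; eexists; eassumption|].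
use_derive Dr; use_derive DpR.
unfold A; rewrite HE; field; lra.
Qed.

Lemma r_sq_quad t : in_tint a b t -> r t ^ 2 = quad A B C t0 t.
Proof.
intros Ht.
enough (Hc : r t ^ 2 - quad A B C t0 t = r t0 ^ 2 - quad A B C t0 t0)
  by (unfold quad, C in *; lra).
apply (is_derive_0_const_tint a b (fun t => r t ^ 2 - quad A B C t0 t)); auto.
intros u Hu; destruct (proj2 sol u Hu) as (Hr & Dr & _).
pose proof (is_derive_quad A B C t0 u) as Dq.
auto_derive; [repeat split; eexists; eassumption|].
use_derive Dr; use_derive Dq.
rewrite <- r_pR_affine by auto; ring.
Qed.

Lemma quad_discriminant : B ^ 2 - 4 * A * C = 8 * k.
Proof.
pose proof (proj1 (proj2 sol t0 Ht0)) as Hr.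
unfold A, B, C, E; rewrite Hen_planar_solution by auto; field; lra.
Qed.

Lemma sqrt_quad_solution t : in_tint a b t -> sqrt (quad A B C t0 t) = r t.
Proof.
intros Ht; rewrite <- r_sq_quad by auto; apply sqrt_pow2, Rlt_le, (proj2 sol t Ht).
Qed.

Lemma quad_root_notin_tint x : quad A B C t0 x = 0 -> ~ in_tint a b x.
Proof.
intros Hx Hxab; pose proof (proj1 (proj2 sol x Hxab)) as Hr.
rewrite <- r_sq_quad in Hx by auto; pose proof (pow_lt _ 2 Hr); lra.
Qed.

Lemma radial_solution_quad_agrees t : in_tint a b t ->
  sqrt (quad A B C t0 t) = r t /\ th t0 = th t /\ 0 = z t /\
  (2 * A * (t - t0) + B) / (2 * sqrt (quad A B C t0 t)) = pR t /\ 0 = pS t.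
Proof.
intros Ht; pose proof (proj1 (proj2 sol t Ht)) as Hr.
destruct (planar_solution t Ht) as [-> ->].
rewrite sqrt_quad_solution, <- r_pR_affine by auto.
repeat split; [apply th_solution_const; auto | field; lra].
Qed.

Lemma tends_origin_at_quad_root (F : (R -> Prop) -> Prop) {FF : Filter F} x :
  filter_le F (locally x) -> F (in_tint a b) -> quad A B C t0 x = 0 ->
  filterlim r F (locally 0) /\ filterlim z F (locally 0).
Proof.
intros HFx Hab Hx; split.
- apply (filterlim_ext_loc (fun t => sqrt (quad A B C t0 t))).
  + apply (filter_imp (in_tint a b)); auto using sqrt_quad_solution.
  + apply (filterlim_filter_le_1 _ HFx).
    assert (Hc : continuous (fun t => sqrt (quad A B C t0 t)) x)
      by (apply continuous_sqrt_comp, (ex_derive_continuous (V := R_NormedModule));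
          eexists; apply is_derive_quad).
    unfold continuous in Hc; rewrite Hx, sqrt_0 in Hc; exact Hc.
- apply (filterlim_ext_loc (fun _ => 0)); [|apply filterlim_const].
  apply (filter_imp (in_tint a b)); auto; intros t Ht; symmetry; apply planar_solution; auto.
Qed.

Lemma passes_origin_of_maximal : maximal_solution k a b r th z pR pS -> passes_origin a b r z.
Proof.
intros [_ Hmax].
assert (HC : 0 < C) by (apply pow_lt, (proj2 sol t0 Ht0)).
destruct (quad_pos_component A B C t0 HC) as (al & be & Hin & (Hq & Hal & Hbe) & Hfin);
  [rewrite quad_discriminant; lra|].
destruct (Hmax al be _ _ _ _ _
            (radial_solution_quad k A B C t0 al be (th t0) quad_discriminant
               (Rbar_lt_trans al t0 be (proj1 Hin) (proj2 Hin)) Hq)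
            (lower_endpoint_le a b al t0 Ht0 (proj1 Hin)
               (fun x Hx => quad_root_notin_tint x (Hal x Hx)))
            (upper_endpoint_ge a b be t0 Ht0 (proj2 Hin)
               (fun x Hx => quad_root_notin_tint x (Hbe x Hx)))
            radial_solution_quad_agrees)
  as [-> ->].
pose proof (proj1 sol) as Hab.
destruct Hfin as [[x Hx]|[x Hx]]; [left | right]; exists x; split; auto;
  (apply (tends_origin_at_quad_root _ x); [apply filter_le_within | | auto]);
  rewrite Hx in Hab |- *.
- apply at_right_in_tint, Hab.
- apply at_left_in_tint, Hab.
Qed.

End Planar.

End Solution.

Theorem theorem4 (k : R) (hk : 0 < k) :
  (forall (a b : Rbar) (r th z pR pS : R -> R),
     is_solution k a b r th z pR pS ->
     passes_origin a b r z ->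
     radial_line k a b r th z pR pS) /\
  (forall (a b : Rbar) (r th z pR pS : R -> R),
     maximal_solution k a b r th z pR pS ->
     (passes_origin a b r z <->
      exists t, in_tint a b t /\ F3 k (r t) (z t) (pR t) (pS t) = 0)).
Proof.
split.
- intros a b r th z pR pS Hsol Hpo.
  apply (radial_line_of_F3_eq0 Hsol hk), (F3_solution_eq0_of_passes_origin Hsol hk Hpo).
- intros a b r th z pR pS Hmax; pose proof (proj1 Hmax) as Hsol; split.
  + intros Hpo; destruct (in_tint_inhabited a b (proj1 Hsol)) as [t Ht].
    exists t; split; auto; apply (F3_solution_eq0_of_passes_origin Hsol hk Hpo t Ht).
  + intros (t0 & Ht0 & HF0).
    assert (F3_0 : forall t, in_tint a b t -> F3 k (r t) (z t) (pR t) (pS t) = 0)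
      by (intros t Ht; rewrite (F3_solution_const Hsol t t0); auto).
    apply (passes_origin_of_maximal Hsol hk F3_0 t0 Ht0 Hmax).
Qed.
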